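(* Let $(\Lambda,d)$ be a finitely aligned $k$-graph with groupoid of germs ${\mathcal G}_\Lambda$. The family $\{\Psi(F),\ {\mathcal G}_\Lambda\setminus\Psi(F): F\in S_\Lambda\}$ is a subbasis for a locally compact Hausdorff topology on ${\mathcal G}_\Lambda$ in which each $\Psi(F)$ is compact.
   Context: A $k$-graph $(\Lambda,d)$ is a countable small category $\Lambda$ (objects identified with identity morphisms) with a functor $d:\Lambda\to\mathbb N^k$ satisfying unique factorization: whenever $d(\lambda)=m+n$ there are unique $\mu,\nu$ with $d(\mu)=m$, $d(\nu)=n$, $\lambda=\mu\nu$. $r,s$ range/source. $\Lambda^{\min}(\lambda,\mu)=\{(\alpha,\beta):\lambda\alpha=\mu\beta,\ d(\lambda\alpha)=d(\lambda)\vee d(\mu)\}$; finitely aligned means all are finite. $S_\Lambda$: finite $F\subseteq\{(\lambda,\mu):s(\lambda)=s(\mu)\}$ with distinct $(\lambda,\mu),(\nu,\omega)\in F$ satisfying $\Lambda^{\min}(\lambda,\nu)=\Lambda^{\min}(\mu,\omega)=\emptyset$; inverse semigroup with $FG=\bigcup_{(\lambda,\mu)\in F,(\xi,\eta)\in G}\{(\lambda\alpha,\eta\beta):(\alpha,\beta)\in\Lambda^{\min}(\mu,\xi)\}$, $F^*=\{(\mu,\lambda):(\lambda,\mu)\in F\}$, idempotents $E(S_\Lambda)$. $\Omega_{k,m}$ ($m\in(\mathbb N\cup\{\infty\})^k$): objects $\{p\in\mathbb N^k:p\le m\}$, morphisms $(p,q)$, $p\le q\le m$, $r(p,q)=p$,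 $s(p,q)=q$, $d(p,q)=q-p$. $X_\Lambda$ = degree-preserving functors $x:\Omega_{k,m}\to\Lambda$, $d(x)=m$, $r(x)=x(0,0)$; $\sigma^m x(p,q)=x(p+m,q+m)$; $\lambda x$ ($s(\lambda)=x(0,0)$) has $(\lambda x)(0,n)=\lambda x(0,n-d(\lambda))$. $D_F=\{x:\exists(\lambda,\mu)\in F,\ x(0,d(\mu))=\mu\}$; $\theta_F(x)=\lambda\sigma^{d(\mu)}x$. $X_\Lambda$ is topologized by the subbasis $\{D_F,X_\Lambda\setminus D_F\}$ (locally compact Hausdorff). ${\mathcal G}_\Lambda$: germs $[F,x]$ of pairs $(F,x)$, $x\in D_F$, under $(F,x)\sim(G,y)$ iff $x=y$ and some $P\in E(S_\Lambda)$ has $x\in D_P$, $FP=GP$; product $[F,\theta_G(x)][G,x]=[FG,x]$, inverse $[F^*,\theta_F(x)]$, $r([F,x])=\theta_F(x)$, $s([F,x])=x$. $\Psi(F)=\{[F,x]:x\in D_F\}$. *)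

From HB Require Import structures.
From mathcomp Require Import all_boot all_classical all_reals topology.
Set Implicit Arguments.
Unset Strict Implicit.
Unset Printing Implicit Defensive.
Local Open Scope classical_set_scope.

Definition nk (k : nat) := 'I_k -> nat.
Definition nk_add k (m n : nk k) : nk k := fun i => (m i + n i)%N.
Definition nk_join k (m n : nk k) : nk k := fun i => maxn (m i) (n i).
Definition nk_le k (m n : nk k) : Prop := forall i, (m i <= n i)%N.
Definition nk0 k : nk k := fun _ => 0%N.
Arguments nk0 : clear implicits.

(** A k-graph: a countable small category whose objects are identified with
    the identity morphisms (an identity/object is a morphism [v] with
    [r v = v]), with range [r], source [s], composition [comp a b] (meaningful
    when [s a = r b]) and a degree functor [d] into N^k satisfying the unique
    factorisation property. *)
Definition is_kgraph (k : nat) (M : Type) (r s : M -> M) (comp : M -> M -> M)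
    (d : M -> nk k) : Prop :=
  [/\ (exists f : M -> nat, injective f) ,
      (forall a, r (r a) = r a /\ s (r a) = r a /\ r (s a) = s a /\ s (s a) = s a),
      (forall a b, s a = r b -> r (comp a b) = r a /\ s (comp a b) = s b)
    & [/\ (forall a, comp (r a) a = a /\ comp a (s a) = a),
      (forall a b c, s a = r b -> s b = r c -> comp (comp a b) c = comp a (comp b c)),
      (forall a, d (r a) = nk0 k /\ forall b, s a = r b -> d (comp a b) = nk_add (d a) (d b))
    & (forall a (m n : nk k), d a = nk_add m n ->
         exists! p : M * M, [/\ s p.1 = r p.2, d p.1 = m, d p.2 = n & a = comp p.1 p.2])]].

Record kgraph (k : nat) := KGraph {
  kmor : Type;
  kr : kmor -> kmor;
  ks : kmor -> kmor;
  kcomp : kmor -> kmor -> kmor;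
  kdeg : kmor -> nk k;
  kgraph_ax : is_kgraph kr ks kcomp kdeg }.

Section KGraphDefs.
Context (k : nat) (L : kgraph k).
Local Notation M := (kmor L).
Local Notation r := (@kr _ L).
Local Notation s := (@ks _ L).
Local Notation comp := (@kcomp _ L).
Local Notation d := (@kdeg _ L).

Definition Lmin (l m : M) : set (M * M) :=
  [set ab | [/\ r ab.1 = s l, r ab.2 = s m, comp l ab.1 = comp m ab.2
             & d (comp l ab.1) = nk_join (d l) (d m)]].

Definition finitely_aligned : Prop := forall l m, finite_set (Lmin l m).

Definition S_Lambda (F : set (M * M)) : Prop :=
  [/\ finite_set F,
      (forall p, F p -> s p.1 = s p.2)
    & (forall p q, F p -> F q -> p <> q ->
         Lmin p.1 q.1 = set0 /\ Lmin p.2 q.2 = set0)].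

Definition Sprod (F G : set (M * M)) : set (M * M) :=
  [set z | exists p q ab, [/\ F p, G q, Lmin p.2 q.1 ab
                           & z = (comp p.1 ab.1, comp q.2 ab.2)]].

Definition Sidem (P : set (M * M)) : Prop := S_Lambda P /\ Sprod P P = P.

(** Paths: degree-preserving functors x : Ω_{k,m} -> Λ.  The degree
    m ∈ (N ∪ {∞})^k is ['I_k -> option nat] ([None] = ∞); the functor is
    recorded as a partial map on pairs (p,q), defined exactly on the
    morphisms (p,q), p ≤ q ≤ m, of Ω_{k,m}. *)
Definition ext_le (q : nk k) (m : 'I_k -> option nat) : Prop :=
  forall i, if m i is Some mi then (q i <= mi)%N else true.

Definition path_t := (('I_k -> option nat) *
                      (nk k -> nk k -> option M))%type.

Definition is_path (x : path_t) : Prop :=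
  let: (m, f) := x in
  [/\ (forall p q, (exists a, f p q = Some a) <-> (nk_le p q /\ ext_le q m)),
      (forall p q a, f p q = Some a -> d a = (fun i => q i - p i)%N),
      (forall p a, f p p = Some a -> r a = a),
      (forall p q a, f p q = Some a -> f p p = Some (r a) /\ f q q = Some (s a))
    & (forall p q t a b c, f p q = Some a -> f q t = Some b -> f p t = Some c ->
         s a = r b /\ c = comp a b)].

Definition DF (F : set (M * M)) (x : path_t) : Prop :=
  is_path x /\ exists p, F p /\ x.2 (nk0 k) (d p.2) = Some p.2.

Definition germ_pair (z : set (M * M) * path_t) : Prop :=
  S_Lambda z.1 /\ DF z.1 z.2.

Definition germ_rel (z w : set (M * M) * path_t) : Prop :=
  z.2 = w.2 /\ exists P, [/\ Sidem P, DF P z.2 & Sprod z.1 P = Sprod w.1 P].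

Definition germ_class (z : set (M * M) * path_t) : set (set (M * M) * path_t) :=
  [set w | germ_pair w /\ germ_rel z w].

Definition is_germ (C : set (set (M * M) * path_t)) : Prop :=
  exists z, germ_pair z /\ C = germ_class z.

End KGraphDefs.

Definition germ k (L : kgraph k) := {C : set (set (kmor L * kmor L) * path_t L) | is_germ C}.

HB.instance Definition _ k (L : kgraph k) := gen_eqMixin (germ L).
HB.instance Definition _ k (L : kgraph k) := gen_choiceMixin (germ L).

Definition Psi k (L : kgraph k) (F : set (kmor L * kmor L)) : set (germ L) :=
  [set g | exists x, DF F x /\ sval g = germ_class (F, x)].

Definition germ_subbasis_dom k (L : kgraph k) : set (bool * set (kmor L * kmor L)) :=
  [set bF | S_Lambda bF.2].
Definition germ_subbasis k (L : kgraph k) (bF : bool * set (kmor L * kmor L)) :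
  set (germ L) := if bF.1 then Psi bF.2 else ~` Psi bF.2.

Definition germ_top k (L : kgraph k) := germ L.
HB.instance Definition _ k (L : kgraph k) := Choice.on (germ_top L).
HB.instance Definition _ k (L : kgraph k) :=
  isSubBaseTopological.Build (germ_top L) (@germ_subbasis_dom k L) (@germ_subbasis k L).

(* A germ [F,x] lies in Psi(G) iff F and G agree along x: some f in F, g in G
   and extensions al, be make f.2 al = g.2 be an initial segment of x and
   f.1 al = g.1 be.  A path is determined by its initial segments, and Psi of
   the singleton {(f.1 al, f.2 al)} detects whether f.2 al is one of them, so
   two germs lying in the same sets Psi(G) are equal; since the subbasis
   contains each Psi(G) together with its complement, the topology is Hausdorff.
   For compactness of Psi(F), let U be an ultrafilter containing Psi(F).  The
   morphisms nu such that U contains the germs [F,y] having nu as an initial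
   segment of y form a nonempty set closed under initial segments; it is
   directed because finite alignment makes the relevant unions finite, and an
   ultrafilter containing a finite union contains one of its members.  Such a
   set is the set of initial segments of a path x, and U converges to [F,x].
   Every germ [F,x] thus has the compact open neighbourhood Psi(F). *)

From HB Require Import structures.
From mathcomp Require Import all_boot all_classical all_reals topology.
From mathcomp Require Import zify.
Local Open Scope classical_set_scope.
Set Implicit Arguments.
Unset Strict Implicit.

Lemma ultra_bigcup_finite (X I : Type) (U : set_system X) (T : set I) (B : I -> set X) :
  UltraFilter U -> finite_set T -> U (\bigcup_(i in T) B i) -> exists2 i, T i & U (B i).
Proof.
move=> UU fT UB; apply: contrapT => noB.
have UC : U (\bigcap_(i in T) ~` B i).
  have [D eT] := (@finite_fsetP {classic I} T).1 fT; rewrite eT.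
  apply: (@filter_bigI X {classic I} D) => i iD; have [UBi|//] := in_ultra_setVsetC (B i) UU.
  by case: noB; exists i; rewrite // eT.
by have [z [[i Ti Bz] /(_ i Ti)]] := filter_ex (filterI UB UC).
Qed.

Definition nk_sub k (m n : nk k) : nk k := fun i => (m i - n i)%N.

Section KGraph.
Variables (k : nat) (L : kgraph k).
Local Notation M := (kmor L).
Local Notation r := (@kr _ L).
Local Notation s := (@ks _ L).
Local Notation comp := (@kcomp _ L).
Local Notation d := (@kdeg _ L).

(** * k-graphs and the inverse semigroup S_Lambda *)

Lemma kr_kr a : r (r a) = r a.
Proof. by case: (kgraph_ax L) => _ /(_ a) []. Qed.
Lemma ks_kr a : s (r a) = r a.
Proof. by case: (kgraph_ax L) => _ /(_ a) [_ []]. Qed.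
Lemma kr_ks a : r (s a) = s a.
Proof. by case: (kgraph_ax L) => _ /(_ a) [_ [_ []]]. Qed.
Lemma kr_comp a b : s a = r b -> r (comp a b) = r a.
Proof. by case: (kgraph_ax L) => _ _ H _ /H []. Qed.
Lemma ks_comp a b : s a = r b -> s (comp a b) = s b.
Proof. by case: (kgraph_ax L) => _ _ H _ /H []. Qed.
Lemma kcomp_r a : comp (r a) a = a.
Proof. by case: (kgraph_ax L) => _ _ _ [/(_ a) []]. Qed.
Lemma kcomp_s a : comp a (s a) = a.
Proof. by case: (kgraph_ax L) => _ _ _ [/(_ a) []]. Qed.
Lemma kcompA a b c :
  s a = r b -> s b = r c -> comp (comp a b) c = comp a (comp b c).
Proof. by case: (kgraph_ax L) => _ _ _ [_ H _ _]; apply: H. Qed.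
Lemma kdeg_r a : d (r a) = nk0 k.
Proof. by case: (kgraph_ax L) => _ _ _ [_ _ /(_ a) []]. Qed.
Lemma kdeg_comp a b i : s a = r b -> d (comp a b) i = (d a i + d b i)%N.
Proof. by case: (kgraph_ax L) => _ _ _ [_ _ /(_ a) [_ H] _] /H ->. Qed.

Lemma kfactor a (m n : nk k) : d a = nk_add m n ->
  exists u v, [/\ s u = r v, d u = m, d v = n & a = comp u v].
Proof.
case: (kgraph_ax L) => _ _ _ [_ _ _ H] /H [[u v] [[/= ? ? ? ?] _]].
by exists u, v.
Qed.

Lemma kfactor_uniq u v u' v' : s u = r v -> s u' = r v' -> d u = d u' ->
  comp u v = comp u' v' -> u = u' /\ v = v'.
Proof.
move=> suv suv' duu' E.
have dvv' : d v = d v'.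
  by apply: funext => i; have := kdeg_comp i suv; rewrite E kdeg_comp // duu'; lia.
case: (kgraph_ax L) => _ _ _ [_ _ _ U].
have /U [[u0 v0] [_ uniq]] : d (comp u v) = nk_add (d u) (d v).
  by apply: funext => i; rewrite kdeg_comp.
have e1 := uniq (u, v) (And4 suv erefl erefl erefl).
have e2 := uniq (u', v') (And4 suv' (esym duu') (esym dvv') E).
by case: (etrans (esym e1) e2).
Qed.

Lemma kcompI a b c : s a = r b -> s a = r c -> comp a b = comp a c -> b = c.
Proof. by move=> sab sac /(kfactor_uniq sab sac erefl) []. Qed.

Lemma kcompIr a b c :
  s a = r c -> s b = r c -> d a = d b -> comp a c = comp b c -> a = b.
Proof. by move=> sac sbc dab /(kfactor_uniq sac sbc dab) []. Qed.

Lemma kdeg_eq0 a : d a = nk0 k -> a = r a /\ a = s a.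
Proof.
move=> da; have E : comp (r a) a = comp a (s a) by rewrite kcomp_r kcomp_s.
have [ra sa] := kfactor_uniq (ks_kr a) (esym (kr_ks a)) (etrans (kdeg_r a) (esym da)) E.
by split; [rewrite ra | exact: sa].
Qed.

Lemma Lmin_common_ext a b x y : s a = r x -> s b = r y -> comp a x = comp b y ->
  exists al be ga, [/\ Lmin a b (al, be), s al = r ga, s be = r ga,
                       x = comp al ga & y = comp be ga].
Proof.
move=> sax sby E; set nu := comp a x; set J := nk_join (d a) (d b).
have dnu_a i : d nu i = (d a i + d x i)%N by rewrite kdeg_comp.
have dnu_b i : d nu i = (d b i + d y i)%N by rewrite /nu E kdeg_comp.
have /kfactor [c [w [scw dc _ enu]]] : d nu = nk_add J (nk_sub (d nu) J).
  apply: funext => i; rewrite /nk_add /nk_sub /J /nk_join.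
  by move: (dnu_a i) (dnu_b i); lia.
have /kfactor [a' [al [sal da' _ ec]]] : d c = nk_add (d a) (nk_sub J (d a)).
  by apply: funext => i; rewrite /nk_add /nk_sub dc /J /nk_join; lia.
have /kfactor [b' [be [sbe db' _ ec']]] : d c = nk_add (d b) (nk_sub J (d b)).
  by apply: funext => i; rewrite /nk_add /nk_sub dc /J /nk_join; lia.
have salw : s al = r w by rewrite -scw ec ks_comp.
have sbew : s be = r w by rewrite -scw ec' ks_comp.
have E1 : comp a x = comp a' (comp al w) by rewrite -/nu enu ec kcompA.
have E2 : comp b y = comp b' (comp be w) by rewrite -E -/nu enu ec' kcompA.
have [ea ->] := kfactor_uniq sax (etrans sal (esym (kr_comp salw))) (esym da') E1.
have [eb ->] := kfactor_uniq sby (etrans sbe (esym (kr_comp sbew))) (esym db') E2.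
subst a' b'; exists al, be, w; split => //.
by split => //=; rewrite -?ec -?ec' // dc.
Qed.

Lemma S_Lambda_s (F : set (M * M)) p : S_Lambda F -> F p -> s p.1 = s p.2.
Proof. by move=> [_ H _]; apply: H. Qed.

Lemma S_Lambda_fin (F : set (M * M)) : S_Lambda F -> finite_set F.
Proof. by case. Qed.

Lemma S_Lambda1 a b : s a = s b -> S_Lambda [set (a, b)].
Proof. by move=> sab; split=> [|p ->|p q -> ->]; first exact: finite_set1. Qed.

Lemma Lmin_eq0 a b x y : Lmin a b = set0 -> s a = r x -> s b = r y ->
  comp a x <> comp b y.
Proof.
move=> Lab0 sax sby /(Lmin_common_ext sax sby) [al [be [ga [+ _ _ _ _]]]].
by rewrite Lab0.
Qed.

Lemma S_Lambda_eq_fst (F : set (M * M)) p q al be : S_Lambda F -> F p -> F q ->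
  s p.1 = r al -> s q.1 = r be -> comp p.1 al = comp q.1 be -> p = q.
Proof.
move=> [_ _ disj] Fp Fq spa sqb E; apply: contrapT => npq.
exact: Lmin_eq0 (disj p q Fp Fq npq).1 spa sqb E.
Qed.

Lemma S_Lambda_eq_snd (F : set (M * M)) p q al be : S_Lambda F -> F p -> F q ->
  s p.2 = r al -> s q.2 = r be -> comp p.2 al = comp q.2 be -> p = q.
Proof.
move=> [_ _ disj] Fp Fq spa sqb E; apply: contrapT => npq.
exact: Lmin_eq0 (disj p q Fp Fq npq).2 spa sqb E.
Qed.

Lemma Sprod_ext (F : set (M * M)) f al : S_Lambda F -> F f -> s f.2 = r al ->
  Sprod F [set (comp f.2 al, comp f.2 al)] = [set (comp f.1 al, comp f.2 al)].
Proof.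
move=> SF Ff sal; set c := comp f.2 al.
have sc : s c = s al by rewrite /c ks_comp.
have dc i : (d f.2 i <= d c i)%N by rewrite /c kdeg_comp //; lia.
apply/seteqP; split => z; last first.
  move=> -> /=; exists f, (c, c), (al, s c); split; rewrite //= ?kcomp_s //.
  split; rewrite //= ?kr_ks ?kcomp_s //.
  by apply: funext => i; rewrite /nk_join -/c; move: (dc i); lia.
move=> [p [q [[al' be'] [Fp /= -> [/= sp2 sc' E dE] ->]]]] /=.
have salbe : s al = r be' by rewrite sc' sc.
have epf : p = f.
  apply: (S_Lambda_eq_snd SF Fp Ff (esym sp2) (_ : s f.2 = r (comp al be'))).
    by rewrite kr_comp.
  by rewrite E /c kcompA.
subst p.
have /kdeg_eq0 [ebe _] : d be' = nk0 k.
  apply: funext => i; have := congr1 (fun t => t i) dE.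
  by rewrite /= E kdeg_comp -?sc' // /nk_join /nk0; move: (dc i); lia.
have {}ebe : be' = s c by rewrite -sc'.
have -> : al' = al by apply: (kcompI (esym sp2) sal); rewrite E ebe kcomp_s.
by rewrite ebe kcomp_s.
Qed.

Lemma Sprod_diag (c : M) : Sprod [set (c, c)] [set (c, c)] = [set (c, c)].
Proof.
have := @Sprod_ext [set (c, c)] (c, c) (s c) (S_Lambda1 erefl) erefl (esym (kr_ks c)).
by rewrite /= kcomp_s.
Qed.

Lemma Sidem_diag (P : set (M * M)) p : Sidem P -> P p -> p.1 = p.2.
Proof.
move=> [SP PP] Pp; have : Sprod P P p by rewrite PP.
move=> [q [q' [[al be] [Pq Pq' [/= sq sq' E dE] ep]]]].
have spp := S_Lambda_s SP Pp.
have eq : q = p.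
  apply: (S_Lambda_eq_fst SP Pq Pp (_ : s q.1 = r al) (esym (kr_ks p.1))) => /=.
    by rewrite (S_Lambda_s SP Pq).
  by rewrite kcomp_s ep.
have eq' : q' = p.
  apply: (S_Lambda_eq_snd SP Pq' Pp (_ : s q'.2 = r be) (esym (kr_ks p.2))) => /=.
    by rewrite -(S_Lambda_s SP Pq').
  by rewrite kcomp_s ep.
subst q q'.
have /kdeg_eq0 [eal _] : d al = nk0 k.
  apply: funext => i; have := congr1 (fun t => d t.1 i) ep.
  by rewrite /= kdeg_comp ?spp // /nk0; lia.
have /kdeg_eq0 [ebe _] : d be = nk0 k.
  apply: funext => i; have := congr1 (fun t => d t.2 i) ep.
  by rewrite /= kdeg_comp -?spp // /nk0; lia.
by move: E; rewrite eal ebe sq sq' !kcomp_s.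
Qed.

(** * Paths and their initial segments *)

Definition path_prefix (x : path_t L) (nu : M) :=
  is_path x /\ x.2 (nk0 k) (d nu) = Some nu.

Section PathAxioms.
Variable x : path_t L.
Hypothesis px : is_path x.

Lemma path_dom p q : (exists a, x.2 p q = Some a) <-> nk_le p q /\ ext_le q x.1.
Proof. by case: x px => m f [H _ _ _ _]. Qed.

Lemma path_deg p q a : x.2 p q = Some a -> d a = nk_sub q p.
Proof. by case: x px => m f [_ H _ _ _]; apply: H. Qed.

Lemma path_comp p q t a b c : x.2 p q = Some a -> x.2 q t = Some b ->
  x.2 p t = Some c -> s a = r b /\ c = comp a b.
Proof. by case: x px => m f [_ _ _ _ H]; apply: H. Qed.

Lemma path_deg0 q a : x.2 (nk0 k) q = Some a -> d a = q.
Proof. by move=> /path_deg ->; apply: funext => i; rewrite /nk_sub /nk0; lia. Qed.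

Lemma path_row0_prefix q a : x.2 (nk0 k) q = Some a -> path_prefix x a.
Proof. by move=> xa; split => //; rewrite (path_deg0 xa). Qed.
End PathAxioms.

Lemma ext_le_trans (p q : nk k) m : nk_le p q -> ext_le q m -> ext_le p m.
Proof. by move=> pq qm i; move: (pq i) (qm i); case: (m i) => //= n; lia. Qed.

Lemma ext_le_join (p q : nk k) m : ext_le p m -> ext_le q m -> ext_le (nk_join p q) m.
Proof.
by move=> pm qm i; move: (pm i) (qm i); rewrite /nk_join; case: (m i) => //= n; lia.
Qed.

Lemma prefix_ext_le x nu : path_prefix x nu -> ext_le (d nu) x.1.
Proof. by move=> [px xnu]; have [] := (path_dom px _ _).1 (ex_intro _ nu xnu). Qed.

Lemma prefix_cut x a b : s a = r b -> path_prefix x (comp a b) -> path_prefix x a.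
Proof.
move=> sab xab; have [px e] := xab.
have dle : nk_le (d a) (d (comp a b)) by move=> i; rewrite kdeg_comp //; lia.
have [u xu] : exists u, x.2 (nk0 k) (d a) = Some u.
  by apply/(path_dom px); split => //; apply: ext_le_trans dle (prefix_ext_le xab).
have [v xv] : exists v, x.2 (d a) (d (comp a b)) = Some v.
  by apply/(path_dom px); split => //; apply: prefix_ext_le.
have [suv E] := path_comp px xu xv e.
have du : d u = d a.
  by rewrite (path_deg px xu); apply: funext => i; rewrite /nk_sub /nk0; lia.
have [<- _] := kfactor_uniq suv sab du (esym E).
by split => //; rewrite du.
Qed.

Lemma prefix_join x a b : path_prefix x a -> path_prefix x b ->
  exists al be, Lmin a b (al, be) /\ path_prefix x (comp a al).
Proof.
move=> xa xb; have [px ea] := xa; have [_ eb] := xb.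
set J := nk_join (d a) (d b).
have Jx : ext_le J x.1 by apply: ext_le_join; apply: prefix_ext_le.
have [c ec] : exists c, x.2 (nk0 k) J = Some c by apply/(path_dom px).
have [al eal] : exists al, x.2 (d a) J = Some al.
  by apply/(path_dom px); split => // i; rewrite /J /nk_join; lia.
have [be ebe] : exists be, x.2 (d b) J = Some be.
  by apply/(path_dom px); split => // i; rewrite /J /nk_join; lia.
have [sal Ea] := path_comp px ea eal ec.
have [sbe Eb] := path_comp px eb ebe ec.
exists al, be; rewrite -Ea; split; last exact: (path_row0_prefix px ec).
by split; rewrite /= ?sal ?sbe -?Ea -?Eb ?(path_deg0 px ec).
Qed.

Lemma ext_le_inj (m m' : 'I_k -> option nat) :
  (forall q : nk k, ext_le q m <-> ext_le q m') -> m = m'.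
Proof.
move=> mm'; apply: funext => i.
pose unit t : nk k := fun j => if j == i then t else 0%N.
have unitP t m0 : ext_le (unit t) m0 <-> (if m0 i is Some n then (t <= n)%N else true).
  split=> [/(_ i)|H j]; first by rewrite /unit eqxx; case: (m0 i).
  by rewrite /unit; case: eqP => [->|_] /=; [move: H | ]; case: (m0 _).
have {}mm' t : (if m i is Some n then (t <= n)%N else true) <->
               (if m' i is Some n then (t <= n)%N else true).
  by rewrite -!unitP.
case: (m i) (m' i) mm' => [a|] [b|] mm' //.
- by congr Some; apply/eqP; rewrite eqn_leq (mm' b).2 ?(mm' a).1.
- by have := (mm' a.+1).2 erefl; rewrite ltnn.
- by have := (mm' b.+1).1 erefl; rewrite ltnn.
Qed.

Section PathExt.
Variables x y : path_t L.
Hypotheses (px : is_path x) (py : is_path y).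
Hypothesis row0_xy : forall q a, x.2 (nk0 k) q = Some a -> y.2 (nk0 k) q = Some a.

Lemma row0_ext_le q : ext_le q x.1 -> ext_le q y.1.
Proof.
move=> qx; have [a /row0_xy ya] : exists a, x.2 (nk0 k) q = Some a by apply/(path_dom px).
by have [] := (path_dom py _ _).1 (ex_intro _ a ya).
Qed.

Lemma row0_path_sub p q a : x.2 p q = Some a -> y.2 p q = Some a.
Proof.
move=> xa; have [pq qx] := (path_dom px _ _).1 (ex_intro _ a xa).
have [u xu] : exists u, x.2 (nk0 k) p = Some u.
  by apply/(path_dom px); split => //; apply: ext_le_trans qx.
have [c xc] : exists c, x.2 (nk0 k) q = Some c by apply/(path_dom px).
have [b yb] : exists b, y.2 p q = Some b.
  by apply/(path_dom py); split => //; apply: row0_ext_le.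
have [sua Ex] := path_comp px xu xa xc.
have [sub Ey] := path_comp py (row0_xy xu) yb (row0_xy xc).
by rewrite yb; congr Some; apply: (kcompI sub sua); rewrite -Ex -Ey.
Qed.
End PathExt.

Lemma prefix_row0 x y : is_path x ->
  (forall nu, path_prefix x nu -> path_prefix y nu) ->
  forall q a, x.2 (nk0 k) q = Some a -> y.2 (nk0 k) q = Some a.
Proof.
move=> px xy q a xa; have [_] := xy _ (path_row0_prefix px xa).
by rewrite (path_deg0 px xa).
Qed.

Lemma path_ext x y : is_path x -> is_path y ->
  (forall nu, path_prefix x nu <-> path_prefix y nu) -> x = y.
Proof.
move=> px py xy.
have row_xy := prefix_row0 px (fun nu => (xy nu).1).
have row_yx := prefix_row0 py (fun nu => (xy nu).2).
have em : x.1 = y.1.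
  by apply: ext_le_inj => q; split; apply: row0_ext_le.
have ef : x.2 = y.2.
  apply: funext => p; apply: funext => q.
  case xpq: (x.2 p q) => [a|]; first by rewrite (row0_path_sub px py row_xy xpq).
  case ypq: (y.2 p q) => [b|] //.
  by rewrite (row0_path_sub py px row_yx ypq) in xpq.
by rewrite [x]surjective_pairing [y]surjective_pairing em ef.
Qed.

Lemma prefix_common_ext x u v : path_prefix x u -> path_prefix x v ->
  exists ga ga', [/\ s u = r ga, s v = r ga', comp u ga = comp v ga'
                   & path_prefix x (comp u ga)].
Proof.
move=> xu xv; have [ga [ga' [[/= rga rga' E _] xuga]]] := prefix_join xu xv.
by exists ga, ga'.
Qed.

Lemma DF_prefix (F : set (M * M)) x : DF F x -> exists2 f, F f & path_prefix x f.2.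
Proof. by move=> [px [p [Fp e]]]; exists p. Qed.

(** * Germs *)

Definition germ_agree (F G : set (M * M)) x := exists f g al be,
  [/\ F f, G g, s f.2 = r al, s g.2 = r be &
   [/\ comp f.2 al = comp g.2 be, path_prefix x (comp f.2 al)
     & comp f.1 al = comp g.1 be]].

Lemma germ_agree_refl (F : set (M * M)) x : DF F x -> germ_agree F F x.
Proof.
move=> /DF_prefix [f Ff xf]; exists f, f, (s f.2), (s f.2).
by split; rewrite ?kr_ks ?kcomp_s.
Qed.

Lemma germ_agree_sym (F G : set (M * M)) x : germ_agree F G x -> germ_agree G F x.
Proof.
move=> [f [g [al [be [Ff Gg sal sbe [E xfal E1]]]]]].
by exists g, f, be, al; split => //; rewrite -E.
Qed.

Lemma germ_agree_trans (F G H : set (M * M)) x :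
  S_Lambda F -> S_Lambda G -> S_Lambda H ->
  germ_agree F G x -> germ_agree G H x -> germ_agree F H x.
Proof.
move=> SF SG SH [f [g [al [be [Ff Gg sal sbe [E xfal E1]]]]]]
  [g' [h [al' [be' [Gg' Hh sal' sbe' [E' xgal' E1']]]]]].
have [ga [ga' [sga sga' Ega xga]]] := prefix_common_ext xfal xgal'.
have {}sga : s al = r ga by rewrite -sga ks_comp.
have {}sga' : s al' = r ga' by rewrite -sga' ks_comp.
have sbega : s be = r ga by rewrite -sga -(ks_comp sal) E ks_comp.
have sbega' : s be' = r ga' by rewrite -sga' -(ks_comp sal') E' ks_comp.
have Eg : comp g.2 (comp be ga) = comp g'.2 (comp al' ga') by rewrite -!kcompA // -E.
have egg' : g = g'.
  by apply: (S_Lambda_eq_snd SG Gg Gg' _ _ Eg); rewrite kr_comp.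
subst g'.
exists f, h, (comp al ga), (comp be' ga'); split; rewrite ?kr_comp //.
split; first by rewrite -!kcompA // -E'.
  by rewrite -kcompA.
have sf1 : s f.1 = r al by rewrite (S_Lambda_s SF Ff).
have sh1 : s h.1 = r be' by rewrite (S_Lambda_s SH Hh).
have sg1 : s g.1 = r be by rewrite (S_Lambda_s SG Gg).
have sg1' : s g.1 = r al' by rewrite (S_Lambda_s SG Gg).
have Eext : comp be ga = comp al' ga' by apply: (kcompI _ _ Eg); rewrite kr_comp.
rewrite -kcompA // E1 kcompA // Eext -kcompA // E1' kcompA //.
Qed.

Lemma germ_agree_rel (F G : set (M * M)) x : S_Lambda F -> S_Lambda G ->
  germ_agree F G x -> germ_rel (F, x) (G, x).
Proof.
move=> SF SG [f [g [al [be [Ff Gg sal sbe [E xfal E1]]]]]].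
set c := comp f.2 al; split => //; exists [set (c, c)]; split.
- by split; [exact: S_Lambda1 | exact: Sprod_diag].
- by have [px xc] := xfal; split => //; exists (c, c).
- by rewrite /= /c (Sprod_ext SF Ff sal) E (Sprod_ext SG Gg sbe) E1.
Qed.

Lemma germ_rel_agree (F G : set (M * M)) x y : S_Lambda F -> DF F x ->
  germ_rel (F, x) (G, y) -> germ_agree F G x.
Proof.
move=> SF /DF_prefix [f Ff xf] [/= exy [P [IP [px [p [Pp xp]]]] E]].
have pP := Sidem_diag IP Pp.
have [al [be [Lfp xfal]]] := prefix_join xf (conj px xp).
have : Sprod F P (comp f.1 al, comp p.2 be) by exists f, p, (al, be); rewrite pP; split.
have [/= ral rbe Eab _] := Lfp.
rewrite E => -[g [q [[al' be'] [Gg Pq [/= ral' rbe' Eab' _] [E1 E2]]]]].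
have qP := Sidem_diag IP Pq.
have eqp : q = p.
  apply: (S_Lambda_eq_snd IP.1 Pq Pp (_ : s q.2 = r be') (esym rbe)).
    by rewrite -qP.
  by rewrite E2.
subst q; exists f, g, al, al'; split => //; split => //.
by rewrite Eab E2 -qP -Eab'.
Qed.

Lemma germ_class_eq (F G : set (M * M)) x y :
  germ_pair (F, x) -> germ_pair (G, y) ->
  germ_class (F, x) = germ_class (G, y) <-> x = y /\ germ_agree F G x.
Proof.
move=> [SF DFx] [SG DFy]; split.
  move=> E; have : germ_class (G, y) (G, y).
    by split; [split | apply: germ_agree_rel => //; apply: germ_agree_refl].
  by rewrite -E => -[_ R]; split; [case: R | exact: germ_rel_agree R].
move=> [exy FG]; subst y; apply/seteqP; split => -[H z] [[SH DHz] R]; split => //;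
  have [/= <- _] := R; apply: germ_agree_rel => //.
- exact: germ_agree_trans SG SF SH (germ_agree_sym FG) (germ_rel_agree SF DFx R).
- exact: germ_agree_trans SF SG SH FG (germ_rel_agree SG DFy R).
Qed.

Lemma Psi_germ_class (F G : set (M * M)) x (h : germ L) :
  S_Lambda F -> DF F x -> S_Lambda G -> sval h = germ_class (F, x) ->
  Psi G h <-> germ_agree F G x.
Proof.
move=> SF DFx SG eh; split.
  by move=> [y [DGy]]; rewrite eh => /germ_class_eq [] // _ [].
move=> FG; have DGx : DF G x.
  have [f [g [al [be [_ Gg _ sbe [E xfal _]]]]]] := FG.
  move: xfal; rewrite E => /(prefix_cut sbe) [px xg].
  by split => //; exists g.
by exists x; split => //; rewrite eh; apply/germ_class_eq.
Qed.

Lemma germ_agreeLmin (F G : set (M * M)) x : S_Lambda F -> S_Lambda G ->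
  germ_agree F G x <-> exists f g ab, [/\ F f, G g, Lmin f.2 g.2 ab,
     comp f.1 ab.1 = comp g.1 ab.2 & path_prefix x (comp f.2 ab.1)].
Proof.
move=> SF SG; split; last first.
  move=> [f [g [[al be] [Ff Gg [/= ral rbe E _] E1 xfal]]]].
  by exists f, g, al, be; split.
move=> [f [g [al [be [Ff Gg sal sbe [E xfal E1]]]]]].
have [al0 [be0 [ga [Lfg sal0 sbe0 eal ebe]]]] := Lmin_common_ext sal sbe E.
have [/= ral0 rbe0 E0 _] := Lfg.
exists f, g, (al0, be0); split => //=; last first.
  apply: (prefix_cut (_ : s (comp f.2 al0) = r ga)); first by rewrite ks_comp.
  by rewrite kcompA // -eal.
have sf1 : s f.1 = r al0 by rewrite (S_Lambda_s SF Ff).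
have sg1 : s g.1 = r be0 by rewrite (S_Lambda_s SG Gg).
apply: (kcompIr (_ : s (comp f.1 al0) = r ga) (_ : s (comp g.1 be0) = r ga));
  rewrite ?ks_comp //.
  apply: funext => i; have := congr1 (fun t => d t i) E1.
  by rewrite eal ebe !kdeg_comp ?kr_comp //; lia.
by rewrite !kcompA // -eal -ebe.
Qed.

Section PathOf.
Variable S : set M.
Hypothesis S_neq0 : S !=set0.
Hypothesis S_cut : forall a b, s a = r b -> S (comp a b) -> S a.
Hypothesis S_directed : forall a b, S a -> S b ->
  exists al be, Lmin a b (al, be) /\ S (comp a al).

Lemma S_deg_inj a b : S a -> S b -> d a = d b -> a = b.
Proof.
move=> Sa Sb dab; have [al [be [[/= ral rbe E _] _]]] := S_directed Sa Sb.
by have [] := kfactor_uniq (esym ral) (esym rbe) dab E.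
Qed.

Lemma S_ub (q : nk k) : (forall i, exists2 nu, S nu & (q i <= d nu i)%N) ->
  exists2 nu, S nu & nk_le q (d nu).
Proof.
move=> qS; suff [nu Snu qnu] :
    exists2 nu, S nu & forall i, i \in enum 'I_k -> (q i <= d nu i)%N.
  by exists nu => // i; apply: qnu; rewrite mem_enum.
elim: (enum 'I_k) => [|i l [nu1 S1 q1]]; first by have [mu Smu] := S_neq0; exists mu.
have [nu2 S2 q2] := qS i.
have [al [be [[/= _ _ _ dE] Sc]]] := S_directed S1 S2.
exists (comp nu1 al) => // j; rewrite in_cons dE /nk_join => /orP [/eqP ->|/q1]; lia.
Qed.

Lemma S_deg_surj (q : nk k) : (forall i, exists2 nu, S nu & (q i <= d nu i)%N) ->
  exists2 nu, S nu & d nu = q.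
Proof.
move=> /S_ub [nu Snu qnu].
have /kfactor [u [v [suv du _ e]]] : d nu = nk_add q (nk_sub (d nu) q).
  by apply: funext => i; rewrite /nk_add /nk_sub; move: (qnu i); lia.
by exists u => //; apply: (S_cut suv); rewrite -e.
Qed.

Lemma S_deg_max i B : (forall nu, S nu -> (d nu i <= B)%N) ->
  exists N, (exists2 nu, S nu & d nu i = N) /\ forall nu, S nu -> (d nu i <= N)%N.
Proof.
elim: B => [|B IH] SB.
  have [mu Smu] := S_neq0; exists 0%N; split=> [|nu /SB //].
  by exists mu => //; move: (SB mu Smu); lia.
have [attained|not_attained] := pselect (exists2 nu, S nu & d nu i = B.+1).
  by exists B.+1.
apply: IH => nu Snu; move: (SB nu Snu); rewrite leq_eqVlt => /orP [/eqP e|//].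
by case: not_attained; exists nu.
Qed.

Definition S_sup_deg : 'I_k -> option nat := fun i =>
  match pselect (exists N, (exists2 nu, S nu & d nu i = N) /\
                  forall nu, S nu -> (d nu i <= N)%N) with
  | left h => Some (projT1 (cid h))
  | right _ => None
  end.

Lemma S_sup_degP i t :
  ((if S_sup_deg i is Some n then (t <= n)%N else true) : bool) <->
  exists2 nu, S nu & (t <= d nu i)%N.
Proof.
rewrite /S_sup_deg; case: pselect => [h|unbounded].
  case: (cid h) => N /= [[nu Snu <-] maxN]; split; first by exists nu.
  by move=> [nu' Snu' tnu']; apply: leq_trans tnu' (maxN _ Snu').
split=> // _; apply: contrapT => tS; case: unbounded; apply: (@S_deg_max i t) => nu Snu.
by case: (leqP (d nu i) t) => // /ltnW tnu; case: tS; exists nu.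
Qed.

Lemma ext_le_S_sup_deg q :
  ext_le q S_sup_deg <-> forall i, exists2 nu, S nu & (q i <= d nu i)%N.
Proof.
by split=> qS i; [apply/S_sup_degP; apply: qS | apply/S_sup_degP; apply: qS].
Qed.

Definition S_seg (p q : nk k) b := exists nu u,
  [/\ S nu, d nu = q, d u = p, s u = r b & nu = comp u b].

Lemma S_seg_uniq p q b b' : S_seg p q b -> S_seg p q b' -> b = b'.
Proof.
move=> [nu [u [Snu dnu du sub e]]] [nu' [u' [Snu' dnu' du' sub' e']]].
have enu : nu = nu' by apply: S_deg_inj => //; rewrite dnu dnu'.
have E : comp u b = comp u' b' by rewrite -e enu e'.
by have [_ ->] := kfactor_uniq sub sub' (etrans du (esym du')) E.
Qed.

Definition S_segment (p q : nk k) : option M :=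
  match pselect (exists b, S_seg p q b) with
  | left h => Some (projT1 (cid h))
  | right _ => None
  end.

Lemma S_segmentP p q b : S_segment p q = Some b <-> S_seg p q b.
Proof.
rewrite /S_segment; case: pselect => [h|nh].
  case: (cid h) => b0 /= Sb0; split=> [[<-] //|Sb].
  by congr Some; apply: S_seg_uniq Sb0 Sb.
by split=> // Sb; case: nh; exists b.
Qed.

Definition path_of : path_t L := (S_sup_deg, S_segment).

Lemma S_seg_deg p q b : S_seg p q b -> d b = nk_sub q p.
Proof.
move=> [nu [u [Snu <- <- sub ->]]].
by apply: funext => i; rewrite /nk_sub kdeg_comp //; lia.
Qed.

Lemma S_seg0 nu : S_seg (nk0 k) (d nu) nu <-> S nu.
Proof.
split=> [[nu' [u [Snu' dnu' /kdeg_eq0 [_ eu] sub e]]]|Snu].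
  by move: e; rewrite eu sub kcomp_r => <-.
by exists nu, (r nu); split; rewrite ?kdeg_r ?ks_kr ?kcomp_r.
Qed.

Lemma path_of_dom p q :
  (exists a, S_segment p q = Some a) <-> nk_le p q /\ ext_le q S_sup_deg.
Proof.
split=> [[a /S_segmentP [nu [u [Snu <- <- sua e]]]]|[pq /ext_le_S_sup_deg qS]].
  split=> [i|]; first by rewrite e kdeg_comp //; lia.
  by apply/ext_le_S_sup_deg => i; exists nu.
have [nu Snu dnu] := S_deg_surj qS.
have /kfactor [u [b [sub du db e]]] : d nu = nk_add p (nk_sub q p).
  by apply: funext => i; rewrite dnu /nk_add /nk_sub; move: (pq i); lia.
by exists b; apply/S_segmentP; exists nu, u.
Qed.

Lemma path_of_rs p q a : S_segment p q = Some a ->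
  S_segment p p = Some (r a) /\ S_segment q q = Some (s a).
Proof.
move=> /S_segmentP [nu [u [Snu dnu du sua e]]].
have Su : S u by apply: (S_cut sua); rewrite -e.
have snu : s nu = s a by rewrite e ks_comp.
split; apply/S_segmentP; first by exists u, u; split; rewrite ?kr_kr -?sua ?kcomp_s.
by exists nu, nu; split; rewrite ?kr_ks // -snu kcomp_s.
Qed.

Lemma path_of_comp p q t a b c : S_segment p q = Some a -> S_segment q t = Some b ->
  S_segment p t = Some c -> s a = r b /\ c = comp a b.
Proof.
move=> /S_segmentP [n1 [u1 [S1 dn1 du1 s1 e1]]] /S_segmentP [n2 [u2 [S2 dn2 du2 s2 e2]]]
  /S_segmentP [n3 [u3 [S3 dn3 du3 s3 e3]]].
have e23 : n2 = n3 by apply: S_deg_inj => //; rewrite dn2 dn3.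
have eu2 : u2 = n1.
  by apply: S_deg_inj; rewrite ?du2 ?dn1 //; apply: (S_cut s2); rewrite -e2.
have sab : s a = r b by rewrite -s2 eu2 e1 ks_comp.
have E : comp u3 c = comp u1 (comp a b) by rewrite -e3 -e23 e2 eu2 e1 kcompA.
have su1 : s u1 = r (comp a b) by rewrite kr_comp.
by have [_ ->] := kfactor_uniq s3 su1 (etrans du3 (esym du1)) E.
Qed.

Lemma path_of_path : is_path path_of.
Proof.
split=> /=; [exact: path_of_dom | | | exact: path_of_rs | exact: path_of_comp].
  by move=> p q a /S_segmentP /S_seg_deg.
move=> p a /S_segmentP /S_seg_deg da.
have /kdeg_eq0 [] // : d a = nk0 k.
by rewrite da; apply: funext => i; rewrite /nk_sub /nk0; lia.
Qed.

Lemma path_of_prefix nu : path_prefix path_of nu <-> S nu.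
Proof.
split=> [[_ /S_segmentP /S_seg0] //|Snu].
by split; [exact: path_of_path | apply/S_segmentP/S_seg0].
Qed.
End PathOf.

Lemma germ_rep (g : germ L) :
  exists F x, [/\ S_Lambda F, DF F x & sval g = germ_class (F, x)].
Proof. by case: g => C [[F x] [[SF DFx] e]]; exists F, x. Qed.

Lemma germ_prefix_sub (F : set (M * M)) x y (g h : germ L) :
  S_Lambda F -> DF F x -> DF F y ->
  sval g = germ_class (F, x) -> sval h = germ_class (F, y) ->
  (forall G, S_Lambda G -> Psi G g -> Psi G h) ->
  forall nu, path_prefix x nu -> path_prefix y nu.
Proof.
move=> SF DFx DFy eg eh gh nu xnu.
have [f Ff xf] := DF_prefix DFx.
have [al [be [[ral rbe E _] xfal]]] := prefix_join xf xnu.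
set c := comp f.2 al.
have sc : s (comp f.1 al) = s c by rewrite /c !ks_comp ?(S_Lambda_s SF Ff).
have SG := S_Lambda1 sc.
(* [Psi {(f.1 al, c)}] contains [F, y] only if [c] is an initial segment of [y]. *)
have /(gh _ SG) : Psi [set (comp f.1 al, c)] g.
  apply/(Psi_germ_class SF DFx SG eg).
  exists f, (comp f.1 al, c), al, (s c); split; rewrite //= ?kr_ks //.
  by split; rewrite ?kcomp_s // -sc kcomp_s.
move=> /(Psi_germ_class SF DFy SG eh) [f' [g' [al' [be' [Ff' /= -> _ sc' [E' + _]]]]]].
rewrite E' /= => /(prefix_cut sc'); rewrite /c E => /prefix_cut; apply.
by rewrite rbe.
Qed.

Lemma germ_sep (g h : germ L) :
  (forall G, S_Lambda G -> Psi G g <-> Psi G h) -> g = h.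
Proof.
move=> gh; have [F [x [SF DFx eg]]] := germ_rep g.
have [y [DFy eh]] : Psi F h by apply/(gh _ SF); exists x.
have exy : x = y.
  apply: path_ext; [exact: DFx.1 | exact: DFy.1 | split].
    by apply: (germ_prefix_sub SF DFx DFy eg eh) => G SG /(gh _ SG).
  by apply: (germ_prefix_sub SF DFy DFx eh eg) => G SG /(gh _ SG).
move: g h eg eh {gh} => [C ?] [C' ?] /= eC eC'.
by apply: eq_exist; rewrite eC eC' exy.
Qed.

(** * The topology on germs *)

Local Notation T := (germ_top L).

Lemma germ_subbasis_open bF : germ_subbasis_dom bF -> open (germ_subbasis bF : set T).
Proof.
move=> DbF; exists [set germ_subbasis bF]; last by rewrite bigcup_set1.
by move=> A ->; apply: finI_from1.
Qed.

Lemma germ_subbasis_nbhs bF (g : T) : germ_subbasis_dom bF -> germ_subbasis bF g ->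
  nbhs g (germ_subbasis bF : set T).
Proof. by move=> /germ_subbasis_open Bo Bg; apply: open_nbhs_nbhs; split. Qed.

Lemma cvg_germ_subbasis (U : set_system T) (g : T) : Filter U ->
  (forall bF, germ_subbasis_dom bF -> germ_subbasis bF g -> U (germ_subbasis bF)) ->
  U --> g.
Proof.
move=> FU Ug B [A [[D' sD' eA] Ag AB]].
move: Ag; rewrite -eA => -[A0 D'A0 A0g].
have [E sE eA0] := sD' A0 D'A0.
apply: (filterS AB); apply: (filterS (_ : A0 `<=` A)).
  by move=> z A0z; rewrite -eA; exists A0.
rewrite -eA0; apply: filter_bigI => i iE.
have Di : germ_subbasis_dom i by have := sE i iE; rewrite inE.
by apply: Ug => //; move: A0g; rewrite -eA0 => /(_ i); apply; rewrite /= iE.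
Qed.

Lemma germ_hausdorff : hausdorff_space T.
Proof.
move=> g h clu; apply: germ_sep => G SG.
have nbhsPsi b (g' : T) : germ_subbasis (b, G) g' -> nbhs g' (germ_subbasis (b, G)).
  exact: germ_subbasis_nbhs.
split=> Gg; apply: contrapT => nGh.
  by have [z [Gz nGz]] := clu _ _ (nbhsPsi true g Gg) (nbhsPsi false h nGh).
by have [z [nGz Gz]] := clu _ _ (nbhsPsi false g nGh) (nbhsPsi true h Gg).
Qed.

Section UltraLimit.
Hypothesis fa : finitely_aligned L.
Variables (F : set (M * M)) (U : set_system T).
Hypotheses (SF : S_Lambda F) (UU : UltraFilter U) (UF : U (Psi F)).

Definition germs_through (nu : M) : set T :=
  [set h | exists y, [/\ DF F y, sval h = germ_class (F, y) & path_prefix y nu]].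

Let S := [set nu | U (germs_through nu)].

Lemma ultra_through_F : exists2 f, F f & S f.2.
Proof.
have : U (\bigcup_(f in F) germs_through f.2).
  apply: filterS UF => h [y [DFy e]]; have [f Ff yf] := DF_prefix DFy.
  by exists f => //; exists y.
by move=> /(ultra_bigcup_finite UU (S_Lambda_fin SF)).
Qed.

Lemma ultra_through_cut a b : s a = r b -> S (comp a b) -> S a.
Proof.
move=> sab; apply: filterS => h [y [DFy e yab]].
by exists y; split => //; exact: prefix_cut sab yab.
Qed.

Lemma ultra_through_directed a b : S a -> S b ->
  exists al be, Lmin a b (al, be) /\ S (comp a al).
Proof.
move=> Sa Sb; have : U (\bigcup_(ab in Lmin a b) germs_through (comp a ab.1)).
  apply: filterS (filterI Sa Sb) => h [[y [DFy ey ya]] [y' [DFy' ey' y'b]]].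
  have [yy' _] := (germ_class_eq (conj SF DFy) (conj SF DFy')).1 (etrans (esym ey) ey').
  subst y'; have [al [be [Lab yaal]]] := prefix_join ya y'b.
  by exists (al, be) => //; exists y.
by move=> /(ultra_bigcup_finite UU (fa a b)) [[al be] Lab Uab]; exists al, be.
Qed.

Let S_neq0 : S !=set0.
Proof. by have [f _ Sf] := ultra_through_F; exists f.2. Qed.

Let x := path_of S.

Let prefix_xP nu : path_prefix x nu <-> S nu.
Proof. exact: path_of_prefix S_neq0 ultra_through_cut ultra_through_directed nu. Qed.

Lemma DF_ultra_limit : DF F x.
Proof.
have [f Ff /prefix_xP [px xf]] := ultra_through_F.
by split => //; exists f.
Qed.

Definition ultra_limit : germ L :=
  exist _ (germ_class (F, x)) (ex_intro _ (F, x) (conj (conj SF DF_ultra_limit) erefl)).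

Lemma Psi_ultra_limit (G : set (M * M)) : S_Lambda G ->
  Psi G ultra_limit <-> exists f g ab, [/\ F f, G g, Lmin f.2 g.2 ab,
     comp f.1 ab.1 = comp g.1 ab.2 & S (comp f.2 ab.1)].
Proof.
move=> SG; rewrite (Psi_germ_class (h := ultra_limit) SF DF_ultra_limit SG erefl).
rewrite (germ_agreeLmin _ SF SG).
by split=> -[f [g [ab [Ff Gg Lfg E /prefix_xP xfab]]]]; exists f, g, ab.
Qed.

Lemma germs_through_Psi (G : set (M * M)) f g ab : S_Lambda G -> F f -> G g ->
  Lmin f.2 g.2 ab -> comp f.1 ab.1 = comp g.1 ab.2 ->
  germs_through (comp f.2 ab.1) `<=` Psi G.
Proof.
move=> SG Ff Gg Lfg E h [y [DFy eh yfab]].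
apply/(Psi_germ_class SF DFy SG eh)/(germ_agreeLmin _ SF SG).
by exists f, g, ab.
Qed.

Lemma ultra_limit_Psi (G : set (M * M)) : S_Lambda G ->
  Psi G ultra_limit <-> U (Psi G).
Proof.
move=> SG; rewrite Psi_ultra_limit //; split.
  move=> [f [g [ab [Ff Gg Lfg E Sfab]]]].
  exact: filterS (germs_through_Psi SG Ff Gg Lfg E) Sfab.
move=> UG; have : U (\bigcup_(f in F) \bigcup_(g in G) \bigcup_(ab in Lmin f.2 g.2)
    [set h | comp f.1 ab.1 = comp g.1 ab.2 /\ germs_through (comp f.2 ab.1) h]).
  apply: filterS (filterI UF UG) => h [[y [DFy eh]] /(Psi_germ_class SF DFy SG eh)].
  move=> /(germ_agreeLmin _ SF SG) [f [g [ab [Ff Gg Lfg E yfab]]]].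
  by exists f => //; exists g => //; exists ab => //; split => //; exists y.
move=> /(ultra_bigcup_finite UU (S_Lambda_fin SF)) [f Ff].
move=> /(ultra_bigcup_finite UU (S_Lambda_fin SG)) [g Gg].
move=> /(ultra_bigcup_finite UU (fa _ _)) [ab Lfg Uab].
have [h [E _]] := filter_ex Uab.
by exists f, g, ab; split => //; apply: filterS Uab => h' [].
Qed.
End UltraLimit.

Lemma Psi_compact (F : set (M * M)) : finitely_aligned L -> S_Lambda F ->
  compact (Psi F : set T).
Proof.
move=> fa SF; rewrite compact_ultra => U UU UF.
have limitP := ultra_limit_Psi fa SF UU UF.
exists (ultra_limit fa SF UU UF); split; first exact/limitP.
apply: cvg_germ_subbasis => -[[] G] /= SG; first by move/(limitP _ SG).
by move=> nG; case: (in_ultra_setVsetC (Psi G) UU) => // /(limitP _ SG).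
Qed.

Lemma germ_locally_compact : finitely_aligned L -> locally_compact [set: T].
Proof.
move=> fa g _; rewrite withinET; have [F [x [SF DFx eg]]] := germ_rep g.
have Fc := Psi_compact fa SF.
exists (Psi F : set T); last by split; last exact: compact_closed germ_hausdorff Fc.
by apply: (@germ_subbasis_nbhs (true, F)); last by exists x.
Qed.
End KGraph.

Unset Implicit Arguments.
Set Strict Implicit.

Theorem proposition6p3 (k : nat) (L : kgraph k) :
  finitely_aligned L ->
  [/\ hausdorff_space (germ_top L),
      locally_compact [set: germ_top L]
    & forall F : set (kmor L * kmor L), S_Lambda F ->
        compact (Psi F : set (germ_top L))].
Proof.
move=> fa; split; [exact: germ_hausdorff | exact: germ_locally_compact |].
by move=> F; apply: Psi_compact.
Qed.
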